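(* Let $\mathcal{H}_A,\mathcal{H}_B$ be finite-dimensional Hilbert spaces with fixed reference bases $\{|i\rangle_A\}$, $\{|m\rangle_B\}$, and product basis on $\mathcal{H}_A\otimes\mathcal{H}_B$. For every state $\rho_{AB}$ with reduced state $\rho_B$, $$C_{l_1}(\rho_{AB})\geq C^{A|B}_{l_1}(\rho_{AB})+C_{l_1}(\rho_B).$$
   Context: For a state $\rho$ on a space with reference basis $\{|k\rangle\}$, $C_{l_1}(\rho)=\sum_{k\neq l}|\langle k|\rho|l\rangle|$ (for $\rho_{AB}$ the product basis is used). Writing $\rho_{AB}=\sum_{i,j}|i\rangle\langle j|_A\otimes\rho^B_{ij}$ with $\rho^B_{ij}=\langle i|\rho_{AB}|j\rangle_A$ operators on $\mathcal{H}_B$, the $l_1$ norm of IQ coherence is $C^{A|B}_{l_1}(\rho_{AB})=\sum_{i\neq j}\|\rho^B_{ij}\|_{\mathrm{tr}}$, where $\|X\|_{\mathrm{tr}}=\mathrm{Tr}\sqrt{X^\dagger X}$. *)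

(* Complex scalars: an arbitrary numeric closed field C
   (e.g. the complex numbers); conjugation is Num.conj ( ^* ). *)
From Stdlib Require Import ClassicalEpsilon.
From mathcomp Require Import all_boot all_order all_algebra.
Set Implicit Arguments. Unset Strict Implicit. Unset Printing Implicit Defensive.
Import Order.TTheory GRing.Theory Num.Theory.
Local Open Scope ring_scope.

Section QDefs.
Variable C : numClosedFieldType.

Definition dagger m n (X : 'M[C]_(m, n)) : 'M[C]_(n, m) :=
  \matrix_(i, j) (X j i)^*.

Definition psd n (A : 'M[C]_n) : Prop :=
  forall v : 'cV[C]_n, 0 <= (dagger v *m A *m v) 0 0.

Definition is_state n (rho : 'M[C]_n) : Prop := psd rho /\ \tr rho = 1.

(* the (unique) positive semidefinite square root of a matrix,
   chosen by classical choice (0 if it does not exist) *)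
Definition psd_sqrt n (M : 'M[C]_n) : 'M[C]_n :=
  epsilon (inhabits 0) (fun S : 'M[C]_n => psd S /\ S *m S = M).

Definition trnorm m n (X : 'M[C]_(m, n)) : C := \tr (psd_sqrt (dagger X *m X)).

Definition Cl1 n (rho : 'M[C]_n) : C :=
  \sum_(k < n) \sum_(l < n | k != l) `|rho k l|.

(* H_A (x) H_B, product basis |i>|m> indexed by mxvec_index i m *)
Definition blockB nA nB (rho : 'M[C]_(nA * nB)) (i j : 'I_nA) : 'M[C]_nB :=
  \matrix_(m, n) rho (mxvec_index i m) (mxvec_index j n).

Definition ptraceA nA nB (rho : 'M[C]_(nA * nB)) : 'M[C]_nB :=
  \sum_(i < nA) blockB rho i i.

Definition Cl1_IQ nA nB (rho : 'M[C]_(nA * nB)) : C :=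
  \sum_(i < nA) \sum_(j < nA | i != j) trnorm (blockB rho i j).

End QDefs.

From Stdlib Require Import ClassicalEpsilon.
From mathcomp Require Import all_boot all_order all_algebra.
From mathcomp Require Import ring.
Set Implicit Arguments. Unset Strict Implicit. Unset Printing Implicit Defensive.
Import Order.TTheory GRing.Theory Num.Theory.
Local Open Scope ring_scope.
Local Open Scope sesquilinear_scope.

(* Splitting the off-diagonal entries of rho in the product
   basis according to the A-indices, the entries with i <> j make up the
   entrywise l1 norms of the off-diagonal blocks rho^B_ij, and the entries with
   i = j, m <> n dominate C_l1(rho_B) = C_l1(sum_i rho^B_ii) by the triangle
   inequality.  It remains to bound the trace norm by the entrywise l1 norm:
   if S = sqrt(X^dagger X), then S_jj^2 <= (S^2)_jj = sum_i |X_ij|^2, so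
   Tr S <= sum_j (sum_i |X_ij|^2)^(1/2) <= sum_j sum_i |X_ij|. *)

Lemma sumr_sqr_le (R : numDomainType) (I : finType) (f : I -> R) :
  (forall i, 0 <= f i) -> \sum_i f i ^+ 2 <= (\sum_i f i) ^+ 2.
Proof.
move=> f_ge0; rewrite [leRHS]expr2 big_distrl /=; apply: ler_sum => i _.
rewrite expr2 ler_wpM2l // (bigD1 i) //= lerDl.
exact: sumr_ge0.
Qed.

Lemma mxvec_index_eq nA nB (i j : 'I_nA) (m n : 'I_nB) :
  (mxvec_index i m == mxvec_index j n) = ((i, m) == (j, n)).
Proof.
by rewrite /mxvec_index (inj_eq (@cast_ord_inj _ _ _)) (inj_eq enum_rank_inj).
Qed.

Lemma big_mxvec_index (R : nmodType) nA nB (F : 'I_(nA * nB) -> R) :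
  \sum_k F k = \sum_(i < nA) \sum_(m < nB) F (mxvec_index i m).
Proof.
rewrite pair_big /= (reindex (fun p : 'I_nA * 'I_nB => mxvec_index p.1 p.2)) //=.
have [g mxvecK mxvecVK] := curry_mxvec_bij nA nB.
exists g => [[i m] _ | k _]; first exact: (mxvecK (i, m)).
by have := mxvecVK k; case: (g k) => i m /= ->.
Qed.

Section PositiveSemidefinite.
Variable C : numClosedFieldType.

Lemma daggerE m n (X : 'M[C]_(m, n)) : dagger X = X ^t*.
Proof. by apply/matrixP => i j; rewrite !mxE. Qed.

Lemma dagger_mul m n p (X : 'M[C]_(m, n)) (Y : 'M[C]_(n, p)) :
  dagger (X *m Y) = dagger Y *m dagger X.
Proof. by rewrite !daggerE trmx_mul map_mxM. Qed.

Lemma daggerK m n (X : 'M[C]_(m, n)) : dagger (dagger X) = X.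
Proof. by rewrite !daggerE trmxCK. Qed.

Lemma dagger_addZ n (u w : 'cV[C]_n) (c : C) :
  dagger (u + c *: w) = dagger u + c^* *: dagger w.
Proof. by apply/matrixP => i j; rewrite !mxE rmorphD rmorphM. Qed.

Definition mxform n (S : 'M[C]_n) (u v : 'cV[C]_n) : C :=
  (dagger u *m S *m v) 0 0.

Lemma mxform_delta n (S : 'M[C]_n) (k l : 'I_n) :
  mxform S (delta_mx k 0) (delta_mx l 0) = S k l.
Proof.
rewrite /mxform.
have -> : dagger (delta_mx k 0 : 'cV[C]_n) = delta_mx 0 k.
  by apply/matrixP => i j; rewrite !mxE rmorph_nat andbC.
by rewrite -rowE -colE !mxE.
Qed.

Lemma psd_diag_ge0 n (S : 'M[C]_n) (j : 'I_n) : psd S -> 0 <= S j j.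
Proof. by move=> S_psd; rewrite -mxform_delta; apply: S_psd. Qed.

Lemma mxform_addZ n (S : 'M[C]_n) (u w : 'cV[C]_n) (c : C) :
  mxform S (u + c *: w) (u + c *: w) =
  mxform S u u + c^* * c * mxform S w w + c * mxform S u w
  + c^* * mxform S w u.
Proof.
rewrite /mxform dagger_addZ !(mulmxDl, mulmxDr) -!(scalemxAl, scalemxAr) !mxE.
ring.
Qed.

Lemma real_polar_conj (x y : C) :
  (x + y)^* = x + y -> ('i * (x - y))^* = 'i * (x - y) -> x^* = y.
Proof.
rewrite rmorphD rmorphM rmorphB /= conjCi => sum_real.
move=> /(congr1 ( *%R 'i)); rewrite !mulrA mulrN -expr2 sqrCi.
rewrite opprK mul1r mulN1r => dif_real.
apply: (@pmulrnI _ 2) => //.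
transitivity ((x^* + y^*) + (x^* - y^*)); first by ring.
by rewrite sum_real dif_real; ring.
Qed.

Lemma psd_conj n (S : 'M[C]_n) : psd S -> forall k l, (S k l)^* = S l k.
Proof.
move=> S_psd k l; pose e a : 'cV[C]_n := delta_mx a 0.
have form_real v : (mxform S v v)^* = mxform S v v := geC0_conj (S_psd v).
have diag_real a : (S a a)^* = S a a by rewrite -mxform_delta form_real.
apply: real_polar_conj.
  have -> : S k l + S l k = mxform S (e k + 1 *: e l) (e k + 1 *: e l) - S k k - S l l.
    by rewrite mxform_addZ !mxform_delta conjC1; ring.
  by rewrite !rmorphB /= form_real !diag_real.
have -> : 'i * (S k l - S l k) = mxform S (e k + 'i *: e l) (e k + 'i *: e l) - S k k - S l l.
  by rewrite mxform_addZ !mxform_delta conjCi mulNr -expr2 sqrCi; ring.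
by rewrite !rmorphB /= form_real !diag_real.
Qed.

Lemma psd_hermsym n (S : 'M[C]_n) : psd S -> S \is hermsymmx.
Proof.
move=> /psd_conj S_conj; apply/is_hermitianmxP.
by rewrite expr0 scale1r; apply/matrixP => i j; rewrite !mxE S_conj.
Qed.

Lemma psd_gram m n (X : 'M[C]_(m, n)) : psd (dagger X *m X).
Proof.
move=> v; rewrite !mulmxA -mulmxA -dagger_mul mxE.
by apply: sumr_ge0 => i _; rewrite mxE mulrC mul_conjC_ge0.
Qed.

Lemma psd_diag_mx n (d : 'rV[C]_n) : (forall k, 0 <= d 0 k) -> psd (diag_mx d).
Proof.
move=> d_ge0 w; rewrite -mulmxA mul_diag_mx mxE; apply: sumr_ge0 => i _.
by rewrite !mxE mulrCA mulr_ge0 // mulrC mul_conjC_ge0.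
Qed.

Lemma psd_conjugate n (U S : 'M[C]_n) : psd S -> psd (dagger U *m S *m U).
Proof.
move=> S_psd v.
by rewrite -!mulmxA !mulmxA -dagger_mul -mulmxA; apply: S_psd.
Qed.

(* S := P^dagger diag(sqrt d) P, from the spectral decomposition
   A = P^dagger diag(d) P of the (Hermitian, hence normal) matrix A. *)
Lemma psd_sqrt_exists n (A : 'M[C]_n) :
  psd A -> exists S : 'M[C]_n, psd S /\ S *m S = A.
Proof.
move=> A_psd; have /hermitian_normalmx/orthomx_spectralP := psd_hermsym A_psd.
set P := spectralmx A; set d := spectral_diag A.
have P_unitary : P \is unitarymx := spectral_unitarymx A.
rewrite invmx_unitary // -daggerE => A_def.
have PPt : P *m dagger P = 1%:M by rewrite daggerE; apply/unitarymxP.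
have d_psd : psd (diag_mx d).
  have -> : diag_mx d = dagger (dagger P) *m A *m dagger P.
    by rewrite daggerK A_def !mulmxA PPt mul1mx -mulmxA PPt mulmx1.
  exact: psd_conjugate.
have d_ge0 k : 0 <= d 0 k by have := psd_diag_ge0 k d_psd; rewrite mxE eqxx.
pose e := map_mx sqrtC d.
exists (dagger P *m diag_mx e *m P); split.
  by apply/psd_conjugate/psd_diag_mx => k; rewrite mxE sqrtC_ge0.
have -> : dagger P *m diag_mx e *m P *m (dagger P *m diag_mx e *m P)
    = dagger P *m (diag_mx e *m (P *m dagger P) *m diag_mx e) *m P.
  by rewrite !mulmxA.
rewrite PPt mulmx1 mulmx_diag A_def; congr (_ *m diag_mx _ *m _).
by apply/rowP => k; rewrite !mxE -expr2 sqrtCK.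
Qed.

Lemma psd_sqrtP n (A : 'M[C]_n) :
  psd A -> psd (psd_sqrt A) /\ psd_sqrt A *m psd_sqrt A = A.
Proof. by move=> /psd_sqrt_exists; apply: epsilon_spec. Qed.

Lemma psd_sqr_diag_le n (S : 'M[C]_n) (j : 'I_n) :
  psd S -> S j j ^+ 2 <= (S *m S) j j.
Proof.
move=> /psd_conj S_conj; rewrite mxE (bigD1 j) //= expr2 lerDl.
by apply: sumr_ge0 => k _; rewrite -(S_conj j k) mul_conjC_ge0.
Qed.

Lemma gram_diag m n (X : 'M[C]_(m, n)) (j : 'I_n) :
  (dagger X *m X) j j = \sum_i `|X i j| ^+ 2.
Proof. by rewrite mxE; apply: eq_bigr => i _; rewrite mxE normCKC. Qed.

End PositiveSemidefinite.

Section CoherenceNorms.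
Variable C : numClosedFieldType.

Definition l1norm m n (X : 'M[C]_(m, n)) : C := \sum_i \sum_j `|X i j|.

Lemma trnorm_le_l1norm m n (X : 'M[C]_(m, n)) : trnorm X <= l1norm X.
Proof.
have [S_psd S_sqr] := psd_sqrtP (psd_gram X).
rewrite /trnorm /l1norm exchange_big /mxtrace; apply: ler_sum => j _.
rewrite -(ler_pXn2r (n := 2)) ?nnegrE ?psd_diag_ge0 ?sumr_ge0 //.
apply: le_trans (psd_sqr_diag_le j S_psd) _.
by rewrite S_sqr gram_diag sumr_sqr_le.
Qed.

Lemma Cl1_sum_le (I : finType) n (M : I -> 'M[C]_n) :
  Cl1 (\sum_i M i) <= \sum_i Cl1 (M i).
Proof.
rewrite /Cl1 exchange_big /=; apply: ler_sum => k _.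
rewrite exchange_big /=; apply: ler_sum => l _.
by rewrite summxE ler_norm_sum.
Qed.

Lemma Cl1_blocks nA nB (rho : 'M[C]_(nA * nB)) :
  Cl1 rho = \sum_i \sum_(j | i != j) l1norm (blockB rho i j)
            + \sum_i Cl1 (blockB rho i i).
Proof.
rewrite -big_split /Cl1 big_mxvec_index; apply: eq_bigr => i _.
under eq_bigr do rewrite big_mkcond big_mxvec_index /=.
rewrite exchange_big /= (bigD1 i) //= addrC; congr (_ + _).
  apply: eq_big => [j | j ji]; first by rewrite eq_sym.
  rewrite /l1norm; apply: eq_bigr => m _; apply: eq_bigr => n _.
  by rewrite mxvec_index_eq xpair_eqE negb_and eq_sym ji mxE.
rewrite big_mkcond; apply: eq_bigr => m _; rewrite [RHS]big_mkcond.
by apply: eq_bigr => n _; rewrite mxvec_index_eq xpair_eqE eqxx mxE.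
Qed.

End CoherenceNorms.

Theorem proposition5 (C : numClosedFieldType) (nA nB : nat)
  (rho : 'M[C]_(nA * nB)) :
  is_state rho ->
  Cl1_IQ rho + Cl1 (ptraceA rho) <= Cl1 rho.
Proof.
move=> _; rewrite Cl1_blocks; apply: lerD; last exact: Cl1_sum_le.
by apply: ler_sum => i _; apply: ler_sum => j _; apply: trnorm_le_l1norm.
Qed.
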